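(* The family $\mathcal{A}$ of all infinite subsets of $\mathbb{N}^{<\mathbb{N}}$ which contain no infinite chain is an M-family.
   Context: $\mathbb{N}^{<\mathbb{N}}$ is the tree of finite sequences of naturals ordered by end-extension $\sqsubset$; a chain is a subset linearly ordered by $\sqsubseteq$. An M-family is a hereditary (closed under infinite subsets) family $\mathcal{A}$ of infinite subsets such that for every sequence $(A_n)_n$ in $\mathcal{A}$ there is $A\in\mathcal{A}$ with $A\setminus\bigcup_{i\ge n}A_i$ finite for every $n$. *)

(* N^{<N} is modelled as [list nat]; subsets as predicates. *)
From Stdlib Require Import List Arith.
Import ListNotations.

Definition finite_set {X : Type} (S : X -> Prop) : Prop :=
  exists l : list X, forall x, S x -> In x l.

Definition infinite_set {X : Type} (S : X -> Prop) : Prop := ~ finite_set S.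

Definition subset {X : Type} (B A : X -> Prop) : Prop := forall x, B x -> A x.

Definition seq_le (s t : list nat) : Prop := exists u, t = s ++ u.

Definition is_chain (C : list nat -> Prop) : Prop :=
  forall s t, C s -> C t -> seq_le s t \/ seq_le t s.

Definition M_family {X : Type} (F : (X -> Prop) -> Prop) : Prop :=
  (forall A, F A -> infinite_set A) /\
  (forall A B, F A -> subset B A -> infinite_set B -> F B) /\
  (forall An : nat -> (X -> Prop), (forall n, F (An n)) ->
     exists A, F A /\
       forall n, finite_set (fun x => A x /\ ~ (exists i, n <= i /\ An i x))).

Definition no_inf_chain_family (A : list nat -> Prop) : Prop :=
  infinite_set A /\
  ~ (exists C, subset C A /\ infinite_set C /\ is_chain C).

(* For the diagonal property,
   given (A_n)_n in the family we build an infinite antichain a_0, a_1, ...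
   with a_k in A_{n_k} for indices n_k >= k; its range A is again in the
   family (a chain inside an antichain has at most one point), and
   A \ U_{i>=n} A_i lies inside {a_0, ..., a_{n-1}}.

   The antichain is built by dependent choice over "stages": a stage records
   the points chosen so far, a lower bound for the next index, and an
   unbounded set M of indices m such that infinitely many points of A_m are
   incomparable with every chosen point.  To extend a stage, pick n in M; the
   surviving points of A_n form an infinite set, hence not a chain, so they
   contain two incomparable points a, a'.  Almost every point is incomparable
   with a or with a' (the exceptions are prefixes of a or a'), so one of them,
   say b, keeps infinitely many survivors in A_m for unboundedly many m > n;
   we choose b and restrict M accordingly. *)

From Stdlib Require Import List Arith Lia FinFun Classical ClassicalEpsilon.
Import ListNotations.

Lemma dependent_choice {T L : Type} (P : T -> Prop) (R : T -> L -> T -> Prop)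
    (s0 : T) :
  P s0 -> (forall s, P s -> exists x s', R s x s' /\ P s') ->
  exists (f : nat -> T) (g : nat -> L),
    f 0 = s0 /\ forall k, P (f k) /\ R (f k) (g k) (f (S k)).
Proof.
  intros H0 Hstep.
  assert (Hnext : forall s : sig P,
            exists p : L * sig P, R (proj1_sig s) (fst p) (proj1_sig (snd p))).
  { intros [s Hs]. destruct (Hstep s Hs) as [x [s' [HR Hs']]].
    exists (x, exist _ s' Hs'). exact HR. }
  set (next := fun s => proj1_sig (constructive_indefinite_description _ (Hnext s))).
  set (F := fun k => Nat.iter k (fun s => snd (next s)) (exist P s0 H0)).
  exists (fun k => proj1_sig (F k)), (fun k => fst (next (F k))).
  split; [reflexivity|]. intros k. split.
  - exact (proj2_sig (F k)).
  - exact (proj2_sig (constructive_indefinite_description _ (Hnext (F k)))).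
Qed.

Lemma finite_subset {X : Type} (S T : X -> Prop) :
  finite_set T -> subset S T -> finite_set S.
Proof. intros [l Hl] HST. exists l. intros x Hx. apply Hl, HST, Hx. Qed.

Lemma infinite_mono {X : Type} (S T : X -> Prop) :
  infinite_set S -> subset S T -> infinite_set T.
Proof. intros HS HST HT. apply HS. exact (finite_subset S T HT HST). Qed.

Lemma finite_union {X : Type} (S T : X -> Prop) :
  finite_set S -> finite_set T -> finite_set (fun x => S x \/ T x).
Proof.
  intros [l Hl] [l' Hl']. exists (l ++ l'). intros x [Hx|Hx];
    apply in_or_app; [left; apply Hl | right; apply Hl']; exact Hx.
Qed.

Lemma injective_range_infinite {X : Type} (a : nat -> X) :
  (forall j k, a j = a k -> j = k) -> infinite_set (fun x => exists k, x = a k).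
Proof.
  intros Hinj [l Hl].
  assert (Hle : length (map a (seq 0 (S (length l)))) <= length l).
  { apply NoDup_incl_length.
    - apply Injective_map_NoDup; [exact Hinj | apply seq_NoDup].
    - intros x Hx. apply in_map_iff in Hx. destruct Hx as [k [<- _]].
      apply Hl. eauto. }
  rewrite length_map, length_seq in Hle. lia.
Qed.

Definition incomp (x y : list nat) : Prop := ~ seq_le x y /\ ~ seq_le y x.

Lemma seq_le_refl (x : list nat) : seq_le x x.
Proof. exists []. now rewrite app_nil_r. Qed.

Lemma incomp_irrefl (x : list nat) : ~ incomp x x.
Proof. intros [H _]. apply H, seq_le_refl. Qed.

Lemma prefixes_finite (a : list nat) : finite_set (fun x => seq_le x a).
Proof.
  exists (map (fun k => firstn k a) (seq 0 (S (length a)))).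
  intros x [u Hu]. apply in_map_iff. exists (length x). split.
  - subst a. rewrite firstn_app, Nat.sub_diag, firstn_O, app_nil_r.
    apply firstn_all.
  - apply in_seq. subst a. rewrite length_app. lia.
Qed.

Lemma predecessors_comparable (a b x : list nat) :
  seq_le a x -> seq_le b x -> seq_le a b \/ seq_le b a.
Proof.
  intros [u Hu] [v Hv]. rewrite Hu in Hv.
  destruct (app_eq_app _ _ _ _ Hv) as [l [[H1 _]|[H1 _]]].
  - right. exists l. exact H1.
  - left. exists l. exact H1.
Qed.

Lemma comparable_with_incomparable_pair (a a' x : list nat) :
  incomp a a' -> ~ incomp a x -> ~ incomp a' x -> seq_le x a \/ seq_le x a'.
Proof.
  intros Haa' Hx Hx'. unfold incomp in *.
  destruct (classic (seq_le x a)) as [H|H]; [now left|].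
  destruct (classic (seq_le x a')) as [H'|H']; [now right|].
  assert (Hax : seq_le a x) by (apply NNPP; tauto).
  assert (Hax' : seq_le a' x) by (apply NNPP; tauto).
  destruct (predecessors_comparable a a' x Hax Hax'); tauto.
Qed.

Lemma split_infinite (I : list nat -> Prop) (a a' : list nat) :
  incomp a a' -> infinite_set I ->
  infinite_set (fun x => I x /\ incomp a x) \/
  infinite_set (fun x => I x /\ incomp a' x).
Proof.
  intros Haa' HI.
  destruct (classic (infinite_set (fun x => I x /\ incomp a x))) as [H|H]; auto.
  right. intros Hfin'. apply NNPP in H. apply HI.
  apply (finite_subset _ _
    (finite_union _ _ (finite_union _ _ H Hfin')
                      (finite_union _ _ (prefixes_finite a) (prefixes_finite a')))).
  intros x Hx.
  destruct (classic (incomp a x)); [left; left; auto|].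
  destruct (classic (incomp a' x)); [left; right; auto|].
  right. exact (comparable_with_incomparable_pair a a' x Haa' ltac:(auto) ltac:(auto)).
Qed.

Lemma incomparable_pair (A I : list nat -> Prop) :
  no_inf_chain_family A -> subset I A -> infinite_set I ->
  exists a a', I a /\ I a' /\ incomp a a'.
Proof.
  intros [_ Hno] HIA HI. apply NNPP. intros Hnone. apply Hno.
  exists I. split; [exact HIA|]. split; [exact HI|].
  intros s t Hs Ht. apply NNPP. intros Hst. apply Hnone.
  exists s, t. unfold incomp. tauto.
Qed.

Lemma chain_in_antichain_finite (S C : list nat -> Prop) :
  (forall x y, S x -> S y -> x <> y -> incomp x y) ->
  subset C S -> is_chain C -> finite_set C.
Proof.
  intros Hanti HCS Hchain.
  destruct (classic (exists x, C x)) as [[x Hx]|Hempty].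
  - exists [x]. intros y Hy. left. apply NNPP. intros Hxy.
    destruct (Hanti x y (HCS x Hx) (HCS y Hy) Hxy).
    destruct (Hchain x y Hx Hy); tauto.
  - exists []. intros y Hy. apply Hempty. eauto.
Qed.

Definition unbounded (M : nat -> Prop) : Prop := forall k, exists m, k <= m /\ M m.

Lemma unbounded_tail (M : nat -> Prop) (n : nat) :
  unbounded M -> unbounded (fun m => M m /\ n < m).
Proof.
  intros HM k. destruct (HM (S n + k)) as [m [Hm HMm]].
  exists m. split; [lia | split; [exact HMm | lia]].
Qed.

Lemma unbounded_split (M P Q : nat -> Prop) :
  unbounded M -> (forall m, M m -> P m \/ Q m) -> unbounded P \/ unbounded Q.
Proof.
  intros HM Hcover.
  destruct (classic (unbounded P)) as [HP|HP]; [now left|]. right.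
  apply not_all_ex_not in HP. destruct HP as [k0 Hk0]. intros k.
  destruct (HM (k + k0)) as [m [Hm HMm]]. exists m. split; [lia|].
  destruct (Hcover m HMm) as [HPm|HQm]; [|exact HQm].
  exfalso. apply Hk0. exists m. split; [lia | exact HPm].
Qed.

Definition fresh (F : list (list nat)) (x : list nat) : Prop :=
  forall f, In f F -> incomp f x.

Definition survivors (An : nat -> list nat -> Prop) (F : list (list nat)) (m : nat)
    : list nat -> Prop :=
  fun x => An m x /\ fresh F x.

Record stage : Type := Stage {
  chosen : list (list nat);
  floor : nat;
  active : nat -> Prop
}.

Definition good (An : nat -> list nat -> Prop) (s : stage) : Prop :=
  (forall m, active s m -> floor s <= m) /\ unbounded (active s) /\
  (forall m, active s m -> infinite_set (survivors An (chosen s) m)).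

Definition extends (An : nat -> list nat -> Prop) (s : stage) (a : list nat)
    (n : nat) (s' : stage) : Prop :=
  active s n /\ An n a /\ fresh (chosen s) a /\
  chosen s' = a :: chosen s /\ floor s' = S n.

Lemma good_extends (An : nat -> list nat -> Prop) (s : stage) :
  (forall m, no_inf_chain_family (An m)) -> good An s ->
  exists (p : list nat * nat) (s' : stage),
    extends An s (fst p) (snd p) s' /\ good An s'.
Proof.
  intros Hfam [Hfloor [Hunb Hsurv]].
  destruct (Hunb 0) as [n [_ Hn]].
  destruct (incomparable_pair (An n) (survivors An (chosen s) n) (Hfam n)
              (fun x Hx => proj1 Hx) (Hsurv n Hn)) as [a [a' [Ha [Ha' Haa']]]].
  set (keeps := fun b m => active s m /\ n < m /\
                  infinite_set (survivors An (b :: chosen s) m)).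
  assert (Hkeeps : forall b m,
            active s m -> n < m ->
            infinite_set (fun x => survivors An (chosen s) m x /\ incomp b x) ->
            keeps b m).
  { intros b m Hm Hnm Hinf. split; [exact Hm | split; [exact Hnm|]].
    apply (infinite_mono _ _ Hinf). intros x [[HAx Hfx] Hbx].
    split; [exact HAx|]. intros f [<-|Hf]; auto. }
  assert (Hchoice : unbounded (keeps a) \/ unbounded (keeps a')).
  { apply (unbounded_split _ _ _ (unbounded_tail _ n Hunb)).
    intros m [Hm Hnm].
    destruct (split_infinite _ a a' Haa' (Hsurv m Hm)) as [H|H];
      [left | right]; eapply Hkeeps; eauto. }
  assert (Hnext : forall b, survivors An (chosen s) n b -> unbounded (keeps b) ->
            exists (p : list nat * nat) (s' : stage),
              extends An s (fst p) (snd p) s' /\ good An s').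
  { intros b [HAb Hfb] Hkb. exists (b, n), (Stage (b :: chosen s) (S n) (keeps b)).
    split; [unfold extends; simpl; auto|].
    split; [|split; [exact Hkb|]].
    - intros m [_ [Hnm _]]. exact Hnm.
    - intros m [_ [_ Hm]]. exact Hm. }
  destruct Hchoice; [apply (Hnext a) | apply (Hnext a')]; assumption.
Qed.
Section ChosenSequence.

Variable An : nat -> list nat -> Prop.
Variables (f : nat -> stage) (g : nat -> list nat * nat).
Hypothesis steps : forall k,
  good An (f k) /\ extends An (f k) (fst (g k)) (snd (g k)) (f (S k)).

Lemma earlier_points_chosen (j k : nat) : j < k -> In (fst (g j)) (chosen (f k)).
Proof.
  induction k as [|k IH]; intros Hjk; [lia|].
  destruct (steps k) as [_ [_ [_ [_ [Hch _]]]]]. rewrite Hch.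
  destruct (Nat.eq_dec j k) as [->|Hne]; [now left | right; apply IH; lia].
Qed.

Lemma chosen_points_incomparable (j k : nat) :
  j < k -> incomp (fst (g j)) (fst (g k)).
Proof.
  intros Hjk. destruct (steps k) as [_ [_ [_ [Hfresh _]]]].
  exact (Hfresh _ (earlier_points_chosen j k Hjk)).
Qed.

Hypothesis floor_start : floor (f 0) = 0.

Lemma floor_grows (k : nat) : k <= floor (f k).
Proof.
  induction k as [|k IH]; [lia|].
  destruct (steps k) as [[Hfloor _] [Hn [_ [_ [_ Hfl]]]]].
  specialize (Hfloor _ Hn). rewrite Hfl. lia.
Qed.

Lemma chosen_index_large (k : nat) : k <= snd (g k).
Proof.
  destruct (steps k) as [[Hfloor _] [Hn _]].
  specialize (Hfloor _ Hn). pose proof (floor_grows k). lia.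
Qed.

End ChosenSequence.

Lemma antichain_sequence (An : nat -> list nat -> Prop) :
  (forall m, no_inf_chain_family (An m)) ->
  exists (a : nat -> list nat) (idx : nat -> nat),
    (forall k, An (idx k) (a k) /\ k <= idx k) /\
    (forall j k, j < k -> incomp (a j) (a k)).
Proof.
  intros Hfam.
  set (s0 := Stage [] 0 (fun _ => True)).
  assert (Hs0 : good An s0).
  { split; [intros; simpl; lia | split].
    - intros k. exists k. simpl. auto.
    - intros m _. apply (infinite_mono _ _ (proj1 (Hfam m))).
      intros x Hx. split; [exact Hx | intros ? []]. }
  destruct (dependent_choice (good An)
              (fun s p s' => extends An s (fst p) (snd p) s') s0 Hs0
              (fun s => good_extends An s Hfam)) as [f [g [Hf0 Hsteps]]].
  assert (Hfloor0 : floor (f 0) = 0) by (rewrite Hf0; reflexivity).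
  exists (fun k => fst (g k)), (fun k => snd (g k)). split.
  - intros k. split; [apply (Hsteps k) | exact (chosen_index_large An f g Hsteps Hfloor0 k)].
  - exact (chosen_points_incomparable An f g Hsteps).
Qed.

Lemma antichain_range_in_family (a : nat -> list nat) :
  (forall j k, j < k -> incomp (a j) (a k)) ->
  no_inf_chain_family (fun x => exists k, x = a k).
Proof.
  intros Hanti.
  assert (Hdistinct : forall j k, j <> k -> incomp (a j) (a k)).
  { intros j k Hjk. destruct (Nat.lt_total j k) as [H|[H|H]].
    - exact (Hanti j k H).
    - contradiction.
    - destruct (Hanti k j H). split; assumption. }
  split.
  - apply injective_range_infinite. intros j k Hjk. apply NNPP. intros Hne.
    apply (incomp_irrefl (a k)). rewrite <- Hjk at 1. exact (Hdistinct j k Hne).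
  - intros [C [HC [Hinf Hchain]]]. apply Hinf.
    apply (chain_in_antichain_finite (fun x => exists k, x = a k) C); [|exact HC | exact Hchain].
    intros x y [j ->] [k ->] Hxy. apply Hdistinct. intros ->. exact (Hxy eq_refl).
Qed.

(* Since a_k lies in A_{n_k} with n_k >= k, only a_0, ..., a_{n-1} can miss
   the tail union U_{i>=n} A_i. *)
Lemma range_almost_in_tails (An : nat -> list nat -> Prop) (a : nat -> list nat)
    (idx : nat -> nat) :
  (forall k, An (idx k) (a k) /\ k <= idx k) ->
  forall n, finite_set (fun x => (exists k, x = a k) /\ ~ (exists i, n <= i /\ An i x)).
Proof.
  intros Hidx n. exists (map a (seq 0 n)). intros x [[k ->] Hout].
  apply in_map_iff. exists k. split; [reflexivity|]. apply in_seq.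
  destruct (le_lt_dec n k) as [Hnk|Hkn]; [|lia].
  exfalso. apply Hout. exists (idx k).
  destruct (Hidx k) as [HA Hk]. split; [lia | exact HA].
Qed.

Lemma no_inf_chain_hereditary (A B : list nat -> Prop) :
  no_inf_chain_family A -> subset B A -> infinite_set B -> no_inf_chain_family B.
Proof.
  intros [_ HA] HBA HB. split; [exact HB|].
  intros [C [HCB HC]]. apply HA. exists C. split; [|exact HC].
  intros x Hx. apply HBA, HCB, Hx.
Qed.

Theorem mainTheorem18 : M_family no_inf_chain_family.
Proof.
  split; [|split].
  - intros A [Hinf _]. exact Hinf.
  - exact no_inf_chain_hereditary.
  - intros An Hfam.
    destruct (antichain_sequence An Hfam) as [a [idx [Hidx Hanti]]].
    exists (fun x => exists k, x = a k). split.
    + exact (antichain_range_in_family a Hanti).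
    + exact (range_almost_in_tails An a idx Hidx).
Qed.
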